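(* Let $(A,\circ)$ be a Novikov algebra, let $f:A\to A$ be a linear map, and define a new multiplication $a\bullet b=a\circ f(b)$. Then for all $a,b,c,d\in A$, $$((a\bullet b)\bullet c)\bullet d+((a\bullet c)\bullet d)\bullet b+((a\bullet d)\bullet b)\bullet c-((a\bullet c)\bullet b)\bullet d-((a\bullet d)\bullet c)\bullet b-((a\bullet b)\bullet d)\bullet c=0.$$
   Context: A (right) Novikov algebra is an algebra $(A,\circ)$ satisfying $a\circ(b\circ c)-(a\circ b)\circ c=a\circ(c\circ b)-(a\circ c)\circ b$ and $a\circ(b\circ c)=b\circ(a\circ c)$ for all $a,b,c$. *)

From HB Require Import structures.
From mathcomp Require Import all_boot all_order all_algebra.
Set Implicit Arguments. Unset Strict Implicit. Unset Printing Implicit Defensive.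
Import GRing.Theory.
Local Open Scope ring_scope.

Definition bilinear_op (K : fieldType) (A : lmodType K) (mul : A -> A -> A) : Prop :=
  (forall a : A, linear (mul a)) /\ (forall b : A, linear (fun a => mul a b)).

Definition novikov_identities (K : fieldType) (A : lmodType K) (mul : A -> A -> A) : Prop :=
  (forall a b c : A,
     mul a (mul b c) - mul (mul a b) c = mul a (mul c b) - mul (mul a c) b) /\
  (forall a b c : A, mul a (mul b c) = mul b (mul a c)).

Definition novikov_algebra (K : fieldType) (A : lmodType K) (mul : A -> A -> A) : Prop :=
  bilinear_op mul /\ novikov_identities mul.

(** The bullet product only enters through the right multiplications
    [R_u : a |-> a o u] by [u = f b, f c, f d], so the identity says that the
    standard polynomial [s_3] vanishes on any three right multiplications of a
    Novikov algebra; neither the linearity of [f] nor that of [o] in its left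
    argument plays a role.  Right symmetry says [[R_v, R_u] = R_[u, v]], and
    left commutativity gives [p o [u, v] = u o (p o v) - v o (p o u)]; after
    regrouping, the alternating sum becomes
    [a o (x o [z, y] + z o [y, x] + y o [x, z])], whose inner cyclic sum
    vanishes by left commutativity again. *)

From HB Require Import structures.
From mathcomp Require Import all_boot all_order all_algebra.

Set Implicit Arguments.
Unset Strict Implicit.
Unset Printing Implicit Defensive.

Import GRing.Theory.
Local Open Scope ring_scope.

Section NovikovRightMultiplications.

Variables (V : zmodType) (circ : V -> V -> V).
Hypothesis circ_additive : forall a, zmod_morphism (circ a).
Hypothesis circ_right_symmetric : forall a b c,
  circ a (circ b c) - circ (circ a b) c = circ a (circ c b) - circ (circ a c) b.
Hypothesis circ_left_comm : forall a b c, circ a (circ b c) = circ b (circ a c).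

Lemma circ0 a : circ a 0 = 0.
Proof. by rewrite -[in LHS](subrr 0) circ_additive subrr. Qed.

Lemma circD a u v : circ a (u + v) = circ a u + circ a v.
Proof.
have circN w : circ a (- w) = - circ a w.
  by rewrite -sub0r circ_additive circ0 sub0r.
by rewrite -{1}[v]opprK circ_additive circN opprK.
Qed.

Lemma circ_cyclic_commutator x y z :
  circ x (circ y z - circ z y) + circ y (circ z x - circ x z)
    + circ z (circ x y - circ y x) = 0.
Proof.
rewrite !circ_additive (circ_left_comm x z) (circ_left_comm y x) (circ_left_comm z y).
by rewrite [LHS](AC ((2*2)*2) (((1*4)*(5*2))*(3*6))) /= !subrr !addr0.
Qed.

Lemma right_mul_commutator a u v :
  circ (circ a u) v - circ (circ a v) u = circ a (circ u v - circ v u).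
Proof.
apply/eqP; rewrite -subr_eq0 circ_additive opprB; apply/eqP.
rewrite [LHS](AC (2*2) ((3*2)*(1*4))) /= -circ_right_symmetric.
by rewrite addrC addrA subrK subrr.
Qed.

Lemma circ_commutator_left_comm p u v :
  circ p (circ u v - circ v u) = circ u (circ p v) - circ v (circ p u).
Proof. by rewrite circ_additive (circ_left_comm p u) (circ_left_comm p v). Qed.

Lemma right_mul_standard_poly a x y z :
  circ (circ (circ a x) y) z + circ (circ (circ a y) z) x
    + circ (circ (circ a z) x) y - circ (circ (circ a y) x) z
    - circ (circ (circ a z) y) x - circ (circ (circ a x) z) y = 0.
Proof.
rewrite [LHS](ACl (((1*6)*(2*4))*(3*5))) /= !right_mul_commutator !circ_commutator_left_comm.
rewrite [LHS](AC ((2*2)*2) (((5*4)*(3*2))*(1*6))) /= -!circ_additive.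
rewrite !right_mul_commutator (circ_left_comm x) (circ_left_comm y) (circ_left_comm z).
by rewrite -!circD circ_cyclic_commutator circ0.
Qed.

End NovikovRightMultiplications.

Theorem mainTheorem8 (K : fieldType) (A : lmodType K) (circ : A -> A -> A)
  (f : {linear A -> A}) :
  novikov_algebra circ ->
  let bul := fun a b : A => circ a (f b) in
  forall a b c d : A,
    bul (bul (bul a b) c) d + bul (bul (bul a c) d) b + bul (bul (bul a d) b) c
    - bul (bul (bul a c) b) d - bul (bul (bul a d) c) b - bul (bul (bul a b) d) c = 0.
Proof.
move=> [[circ_linear _] [circ_right_symmetric circ_left_comm]] bul a b c d.
have circ_additive u : zmod_morphism (circ u).
  exact: zmod_morphism_linear (circ_linear u).
exact: (@right_mul_standard_poly A circ circ_additive circ_right_symmetric circ_left_comm).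
Qed.
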